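(* Consider Markovian SIR dynamics on a tree network $D$ with independent initial node states. Then for all $i,j\in V$ and all $t\ge0$ the following hold exactly: $$\frac{d}{dt}\langle S_i\rangle=-\sum_{j=1}^N T_{ij}\langle S_iI_j\rangle,\qquad \frac{d}{dt}\langle I_i\rangle=\sum_{j=1}^N T_{ij}\langle S_iI_j\rangle-\gamma_i\langle I_i\rangle,$$ $$\frac{d}{dt}\langle S_iI_j\rangle=\sum_{k\neq i}T_{jk}\frac{\langle S_iS_j\rangle\langle S_jI_k\rangle}{\langle S_j\rangle}-\sum_{k\neq j}T_{ik}\frac{\langle S_iI_k\rangle\langle S_iI_j\rangle}{\langle S_i\rangle}-T_{ij}\langle S_iI_j\rangle-\gamma_j\langle S_iI_j\rangle,$$ $$\frac{d}{dt}\langle S_iS_j\rangle=-\sum_{k\neq j}T_{ik}\frac{\langle S_iS_j\rangle\langle S_iI_k\rangle}{\langle S_i\rangle}-\sum_{k\neq i}T_{jk}\frac{\langle S_iS_j\rangle\langle S_jI_k\rangle}{\langle S_j\rangle},$$ where a fraction whose denominator vanishes is interpreted as $0$.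
   Context: $D=(V,A)$ is a directed graph on $V=\{1,\dots,N\}$, with rates $T_{ij}\ge0$, $T_{ij}>0$ iff $(j,i)\in A$, $T_{ii}=0$, and removal rates $\gamma_i>0$. Markovian SIR dynamics: continuous-time Markov chain on $\{S,I,R\}^V$; while $j$ is infectious it makes infectious contacts to $i$ by a Poisson process of rate $T_{ij}$; a susceptible node receiving an infectious contact immediately becomes infectious; infectious node $i$ becomes removed at rate $\gamma_i$; $R$ is absorbing. The node states at time $0$ are mutually independent. $S_i,I_i$ are indicators that node $i$ is susceptible/infectious at time $t$, $\langle\cdot\rangle$ is expectation, and products denote joint indicators. $D$ is a tree network if its underlying undirected graph (obtained by replacing every arc by an undirected edge) is a tree or a forest. *)

From Stdlib Require Import Reals List Arith.
Import ListNotations.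
Open Scope R_scope.

Inductive st : Type := Sus | Inf | Rem.

Definition st_eq_dec (a b : st) : {a = b} + {a <> b}.
Proof. decide equality. Defined.

(* A configuration is a list of node states; node i (0 <= i < N) has state
   [nth i x Rem]. *)
Definition config := list st.

Definition config_eq_dec : forall x y : config, {x = y} + {x <> y} :=
  list_eq_dec st_eq_dec.

Definition node (x : config) (i : nat) : st := nth i x Rem.

Fixpoint all_configs (N : nat) : list config :=
  match N with
  | O => [ [] ]
  | S n => flat_map (fun c => [Sus :: c; Inf :: c; Rem :: c]) (all_configs n)
  end.

Fixpoint upd (x : config) (i : nat) (s : st) : config :=
  match x, i with
  | [], _ => []
  | _ :: x', O => s :: x'
  | a :: x', S i' => a :: upd x' i' s
  end.

Definition sumV (N : nat) (f : nat -> R) : R :=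
  fold_right Rplus 0 (map f (seq 0 N)).

Definition sumC (N : nat) (f : config -> R) : R :=
  fold_right Rplus 0 (map f (all_configs N)).

Definition indS (i : nat) (x : config) : R :=
  match node x i with Sus => 1 | _ => 0 end.
Definition indI (i : nat) (x : config) : R :=
  match node x i with Inf => 1 | _ => 0 end.

Definition inf_rate (N : nat) (T : nat -> nat -> R) (x : config) (i : nat) : R :=
  sumV N (fun j => T i j * indI j x).

Definition rate (N : nat) (T : nat -> nat -> R) (gamma : nat -> R)
  (x y : config) : R :=
  sumV N (fun i =>
    (if config_eq_dec y (upd x i Inf) then indS i x * inf_rate N T x i else 0)
    + (if config_eq_dec y (upd x i Rem) then indI i x * gamma i else 0)).

Definition out_rate (N : nat) (T : nat -> nat -> R) (gamma : nat -> R)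
  (x : config) : R :=
  sumV N (fun i => indS i x * inf_rate N T x i + indI i x * gamma i).

Definition master_eq (N : nat) (T : nat -> nat -> R) (gamma : nat -> R)
  (p : R -> config -> R) : Prop :=
  forall (t : R) (y : config), In y (all_configs N) ->
    derivable_pt_lim (fun s => p s y) t
      (sumC N (fun x => p t x * rate N T gamma x y) - p t y * out_rate N T gamma y).

Definition indep_init (N : nat) (pi : nat -> st -> R) (p : R -> config -> R) : Prop :=
  (forall i s, (i < N)%nat -> 0 <= pi i s) /\
  (forall i, (i < N)%nat -> pi i Sus + pi i Inf + pi i Rem = 1) /\
  (forall x, In x (all_configs N) ->
     p 0 x = fold_right Rmult 1 (map (fun i => pi i (node x i)) (seq 0 N))).

Definition expect (N : nat) (p : R -> config -> R) (t : R) (f : config -> R) : R :=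
  sumC N (fun x => p t x * f x).

Definition sdiv (a b : R) : R := if Req_EM_T b 0 then 0 else a / b.

(* underlying undirected graph: i ~ j iff (j,i) in A or (i,j) in A *)
Definition adj (T : nat -> nat -> R) (i j : nat) : Prop := T i j > 0 \/ T j i > 0.

Fixpoint chain (T : nat -> nat -> R) (l : list nat) : Prop :=
  match l with
  | a :: ((b :: _) as l') => adj T a b /\ chain T l'
  | _ => True
  end.

Definition is_forest (N : nat) (T : nat -> nat -> R) : Prop :=
  forall (v : nat) (l : list nat),
    NoDup (v :: l) -> (forall x, In x (v :: l) -> (x < N)%nat) ->
    (2 <= length l)%nat -> chain T (v :: l) -> ~ adj T (last l v) v.

From Stdlib Require Import Reals List Lia Lra Psatz Permutation ClassicalEpsilon.
Import ListNotations.
Open Scope R_scope.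

(* Fix a node [c] and a neighbour [a] of [c]. In a forest, [c] separates the branch [B]
   containing [a] from the remaining nodes, so a configuration splits as [x = (x_B, x_B')].
   On pairs of configurations in which [c] is susceptible, the defect
   [p(x) p(y) - p(x_B, y_B') p(y_B, x_B')] satisfies a linear system with nonnegative
   coefficients: transitions on either side of [c] only feel [c], which stays susceptible.
   The defect vanishes at time 0 by independence, hence forever; summing it against
   functions of [x_B] and of [x_B'] gives [<S_c phi(x_a) I_k> <S_c> = <S_c phi(x_a)> <S_c I_k>]
   for every other neighbour [k] of [c]. This closes the triple moments that the forward
   equation produces in the derivatives of the pair moments. The same linear-system argument
   shows that probabilities stay nonnegative, which handles the case [<S_c> = 0]. *)

Definition sumL {A} (l : list A) (f : A -> R) : R := fold_right Rplus 0 (map f l).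

Lemma sumV_sumL N f : sumV N f = sumL (seq 0 N) f.
Proof. reflexivity. Qed.

Lemma sumC_sumL N f : sumC N f = sumL (all_configs N) f.
Proof. reflexivity. Qed.

Lemma sumL_cons {A} (a : A) (l : list A) (f : A -> R) : sumL (a :: l) f = f a + sumL l f.
Proof. reflexivity. Qed.

Lemma sumL_ext {A} (l : list A) (f g : A -> R) : (forall a, In a l -> f a = g a) -> sumL l f = sumL l g.
Proof.
  induction l as [|a l IH]; intros H; [reflexivity|].
  rewrite !sumL_cons, IH by (intros; apply H; simpl; auto).
  rewrite H by (simpl; auto). reflexivity.
Qed.

Lemma sumL_plus {A} (l : list A) (f g : A -> R) : sumL l (fun a => f a + g a) = sumL l f + sumL l g.
Proof. induction l as [|a l IH]; [unfold sumL; simpl; lra|]. rewrite !sumL_cons, IH; lra. Qed.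

Lemma sumL_minus {A} (l : list A) (f g : A -> R) : sumL l (fun a => f a - g a) = sumL l f - sumL l g.
Proof. induction l as [|a l IH]; [unfold sumL; simpl; lra|]. rewrite !sumL_cons, IH; lra. Qed.

Lemma sumL_opp {A} (l : list A) (f : A -> R) : sumL l (fun a => - f a) = - sumL l f.
Proof. induction l as [|a l IH]; [unfold sumL; simpl; lra|]. rewrite !sumL_cons, IH; lra. Qed.

Lemma sumL_scal {A} (l : list A) (c : R) (f : A -> R) : sumL l (fun a => c * f a) = c * sumL l f.
Proof. induction l as [|a l IH]; [unfold sumL; simpl; lra|]. rewrite !sumL_cons, IH; lra. Qed.

Lemma sumL_scalr {A} (l : list A) (c : R) (f : A -> R) : sumL l (fun a => f a * c) = sumL l f * c.
Proof. induction l as [|a l IH]; [unfold sumL; simpl; lra|]. rewrite !sumL_cons, IH; lra. Qed.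

Lemma sumL_zero {A} (l : list A) (f : A -> R) : (forall a, In a l -> f a = 0) -> sumL l f = 0.
Proof.
  induction l as [|a l IH]; intros H; [reflexivity|].
  rewrite sumL_cons, IH by (intros; apply H; simpl; auto).
  rewrite H by (simpl; auto). lra.
Qed.

Lemma sumL_le {A} (l : list A) (f g : A -> R) : (forall a, In a l -> f a <= g a) -> sumL l f <= sumL l g.
Proof.
  induction l as [|a l IH]; intros H; [unfold sumL; simpl; lra|].
  rewrite !sumL_cons. apply Rplus_le_compat; simpl in *; auto.
Qed.

Lemma sumL_nonneg {A} (l : list A) (f : A -> R) : (forall a, In a l -> 0 <= f a) -> 0 <= sumL l f.
Proof.
  intros H. rewrite <- (sumL_zero l (fun _ => 0)) by auto. apply sumL_le; auto.
Qed.

Lemma sumL_term {A} (l : list A) (f : A -> R) (a : A) : (forall b, In b l -> 0 <= f b) -> In a l -> f a <= sumL l f.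
Proof.
  induction l as [|b l IH]; intros H Ha; [destruct Ha|].
  rewrite sumL_cons. destruct Ha as [<-|Ha].
  - assert (0 <= sumL l f) by (apply sumL_nonneg; intros; apply H; simpl; auto). lra.
  - assert (0 <= f b) by (apply H; simpl; auto).
    assert (f a <= sumL l f) by (apply IH; auto; intros; apply H; simpl; auto). lra.
Qed.

Lemma sumL_app {A} (l1 l2 : list A) (f : A -> R) : sumL (l1 ++ l2) f = sumL l1 f + sumL l2 f.
Proof. induction l1 as [|a l IH]; [unfold sumL; simpl; lra|]. simpl app. rewrite !sumL_cons, IH; lra. Qed.

Lemma sumL_map {A B} (h : B -> A) (l : list B) (f : A -> R) : sumL (map h l) f = sumL l (fun b => f (h b)).
Proof. unfold sumL. rewrite map_map. reflexivity. Qed.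

Lemma sumL_flat_map {A B} (l : list B) (h : B -> list A) (f : A -> R) :
  sumL (flat_map h l) f = sumL l (fun b => sumL (h b) f).
Proof. induction l as [|b l IH]; [reflexivity|]. simpl. rewrite sumL_app, IH. reflexivity. Qed.

Lemma sumL_swap {A B} (l : list A) (l' : list B) (F : A -> B -> R) :
  sumL l (fun a => sumL l' (F a)) = sumL l' (fun b => sumL l (fun a => F a b)).
Proof.
  induction l as [|a l IH].
  - change (0 = sumL l' (fun b => 0)). symmetry. apply sumL_zero. reflexivity.
  - rewrite sumL_cons, IH, <- sumL_plus. reflexivity.
Qed.

Lemma sumL_list_prod {A B} (l : list A) (l' : list B) (F : A * B -> R) :
  sumL (list_prod l l') F = sumL l (fun a => sumL l' (fun b => F (a, b))).
Proof.
  induction l as [|a l IH]; [reflexivity|].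
  simpl list_prod. rewrite sumL_app, sumL_map, IH. reflexivity.
Qed.

Lemma sumL_Permutation {A} (l l' : list A) (f : A -> R) : Permutation l l' -> sumL l f = sumL l' f.
Proof. induction 1; rewrite ?sumL_cons; lra. Qed.

Lemma sumL_delta {A} (dec : forall a b : A, {a = b} + {a <> b}) (l : list A) (z : A) (f : A -> R) :
  NoDup l -> In z l -> sumL l (fun a => if dec a z then f a else 0) = f z.
Proof.
  induction 1 as [|a l Hnot Hnd IH]; intros Hz; [destruct Hz|].
  rewrite sumL_cons. destruct Hz as [<-|Hz].
  - destruct (dec a a) as [_|]; [|congruence].
    rewrite sumL_zero; [lra|]. intros b Hb. destruct (dec b a); congruence.
  - destruct (dec a z); [subst; contradiction|]. rewrite IH; auto; lra.
Qed.

Lemma derivable_pt_lim_mult_const (g : R -> R) c t l : derivable_pt_lim g t l ->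
  derivable_pt_lim (fun s => g s * c) t (l * c).
Proof.
  intros H. replace (l * c) with (l * c + g t * 0) by ring.
  apply (derivable_pt_lim_mult g (fun _ => c)); auto. apply derivable_pt_lim_const.
Qed.

Lemma derivable_pt_lim_sumL {A} (l : list A) (F : R -> A -> R) (dF : A -> R) t :
  (forall a, In a l -> derivable_pt_lim (fun s => F s a) t (dF a)) ->
  derivable_pt_lim (fun s => sumL l (F s)) t (sumL l dF).
Proof.
  induction l as [|a l IH]; intros H.
  - apply derivable_pt_lim_const.
  - apply (derivable_pt_lim_plus (fun s => F s a) (fun s => sumL l (F s)));
      [apply H | apply IH; intros; apply H]; simpl; auto.
Qed.

Lemma sumV_delta N a X : (a < N)%nat -> sumV N (fun m => if Nat.eq_dec m a then X else 0) = X.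
Proof.
  intros Ha. apply (sumL_delta Nat.eq_dec (seq 0 N) a (fun _ => X));
    [apply seq_NoDup | apply in_seq; lia].
Qed.

Lemma sumV_split N j g :
  (j < N)%nat -> sumV N g = sumV N (fun k => if Nat.eq_dec k j then 0 else g k) + g j.
Proof.
  intros Hj. rewrite !sumV_sumL.
  rewrite <- (sumL_delta Nat.eq_dec (seq 0 N) j g) by (apply seq_NoDup || (apply in_seq; lia)).
  rewrite <- sumL_plus. apply sumL_ext; intros k _. destruct (Nat.eq_dec k j); lra.
Qed.

Lemma all_configs_length N x : In x (all_configs N) <-> length x = N.
Proof.
  revert x; induction N as [|N IH]; intros x; simpl.
  - split; [intros [<-|[]]; reflexivity|]. destruct x; [auto|discriminate].
  - rewrite in_flat_map. split.
    + intros [y [Hy Hx]]. apply IH in Hy. destruct Hx as [<-|[<-|[<-|[]]]]; simpl; auto.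
    + destruct x as [|a y]; intros H; [discriminate|]. injection H as Hy.
      exists y; split; [apply IH; auto|]. destruct a; simpl; auto.
Qed.

Lemma all_configs_NoDup N : NoDup (all_configs N).
Proof.
  induction N as [|N IH]; simpl; [repeat constructor; auto|].
  induction IH as [|y l Hy Hl IHl]; simpl; [constructor|].
  assert (Htl : forall x, In x (flat_map (fun c => [Sus :: c; Inf :: c; Rem :: c]) l) -> In (tl x) l).
  { intros x Hx. apply in_flat_map in Hx as [z [Hz Hx]].
    destruct Hx as [<-|[<-|[<-|[]]]]; auto. }
  repeat constructor; auto; simpl.
  - intros [H|[H|H]]; try discriminate. apply Hy, (Htl _ H).
  - intros [H|H]; try discriminate. apply Hy, (Htl _ H).
  - intros H. apply Hy, (Htl _ H).
Qed.

Lemma sumC_S N f :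
  sumC (S N) f = sumC N (fun x => f (Sus :: x) + f (Inf :: x) + f (Rem :: x)).
Proof.
  rewrite !sumC_sumL. simpl all_configs. rewrite sumL_flat_map.
  apply sumL_ext; intros. unfold sumL; simpl; lra.
Qed.

Lemma sumC_delta N z f :
  In z (all_configs N) -> sumC N (fun x => if config_eq_dec x z then f x else 0) = f z.
Proof. intros Hz. apply sumL_delta; auto. apply all_configs_NoDup. Qed.

Lemma node_overflow x m : (length x <= m)%nat -> node x m = Rem.
Proof. intros; apply nth_overflow; auto. Qed.

Lemma config_ext x y : length x = length y ->
  (forall m, (m < length x)%nat -> node x m = node y m) -> x = y.
Proof. apply nth_ext. Qed.

Lemma upd_length x i s : length (upd x i s) = length x.
Proof. revert i; induction x; intros [|i]; simpl; auto. Qed.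

Lemma upd_overflow x i s : (length x <= i)%nat -> upd x i s = x.
Proof.
  revert i; induction x as [|a x IH]; intros [|i] Hi; simpl in *; auto; [lia|].
  rewrite IH by lia. reflexivity.
Qed.

Lemma node_upd x i s m : (i < length x)%nat ->
  node (upd x i s) m = if Nat.eq_dec m i then s else node x m.
Proof.
  unfold node. revert i m; induction x as [|a x IH]; intros i m Hi; simpl in *; [lia|].
  destruct i as [|i], m as [|m]; simpl; auto.
  rewrite IH by lia. destruct (Nat.eq_dec m i), (Nat.eq_dec (S m) (S i)); auto; lia.
Qed.

Lemma upd_in N x i s : In x (all_configs N) -> In (upd x i s) (all_configs N).
Proof. rewrite !all_configs_length, upd_length; auto. Qed.

Definition mix (A : nat -> bool) (x y : config) : config :=
  map (fun m => if A m then node x m else node y m) (seq 0 (length x)).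

Lemma mix_length A x y : length (mix A x y) = length x.
Proof. unfold mix; rewrite length_map, length_seq; auto. Qed.

Lemma node_mix A x y m : length x = length y ->
  node (mix A x y) m = if A m then node x m else node y m.
Proof.
  intros Hl. destruct (Nat.lt_ge_cases m (length x)).
  - set (f := fun k => if A k then node x k else node y k).
    unfold mix; fold f. unfold node at 1.
    rewrite nth_indep with (d' := f 0%nat) by (rewrite length_map, length_seq; auto).
    rewrite map_nth, seq_nth by auto. reflexivity.
  - rewrite !node_overflow; try rewrite mix_length; try lia. destruct (A m); auto.
Qed.

Lemma mix_in N A x y : In x (all_configs N) -> In (mix A x y) (all_configs N).
Proof. rewrite !all_configs_length, mix_length; auto. Qed.

Lemma mix_involutive A x y : length x = length y -> mix A (mix A x y) (mix A y x) = x.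
Proof.
  intros Hl. apply config_ext; rewrite ?mix_length; auto.
  intros m _. rewrite !node_mix by (rewrite ?mix_length; auto). destruct (A m); auto.
Qed.

Lemma upd_mix A x y m s : length x = length y -> (m < length x)%nat ->
  upd (mix A x y) m s = if A m then mix A (upd x m s) y else mix A x (upd y m s).
Proof.
  intros Hl Hm. destruct (A m) eqn:Am; apply config_ext; rewrite ?upd_length, ?mix_length, ?upd_length; auto;
    intros k Hk; rewrite ?node_upd, ?node_mix, ?node_upd by (rewrite ?upd_length, ?mix_length; lia);
    destruct (Nat.eq_dec k m); subst; rewrite ?Am; auto; destruct (A k); auto.
Qed.

Lemma mix_upd_l A x y m s : A m = false -> (m < length x)%nat ->
  mix A (upd x m s) y = mix A x y.
Proof.
  intros Am Hm. unfold mix. rewrite upd_length. apply map_ext; intros k.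
  rewrite node_upd by auto.
  destruct (Nat.eq_dec k m); subst; rewrite ?Am; auto.
Qed.

Lemma mix_upd_r A x y m s : A m = true -> (m < length y)%nat ->
  mix A x (upd y m s) = mix A x y.
Proof.
  intros Am Hm. unfold mix. apply map_ext; intros k.
  rewrite node_upd by auto. destruct (Nat.eq_dec k m); subst; rewrite ?Am; auto.
Qed.

Lemma config_eq_dec_cons a y b z (u v : R) :
  (if config_eq_dec (a :: y) (b :: z) then u else v) =
  (if st_eq_dec a b then (if config_eq_dec y z then u else v) else v).
Proof.
  destruct (config_eq_dec (a :: y) (b :: z)) as [E|E], (st_eq_dec a b), (config_eq_dec y z);
    subst; auto; congruence.
Qed.

Lemma sumC_upd_preimage n : forall y m s (h : config -> R), length y = n -> (m < n)%nat ->
  sumC n (fun x => if config_eq_dec y (upd x m s) then h x else 0) =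
  if st_eq_dec (node y m) s then h (upd y m Sus) + h (upd y m Inf) + h (upd y m Rem) else 0.
Proof.
  induction n as [|n IH]; intros y m s h Hy Hm; [lia|].
  destruct y as [|a y]; [discriminate|]. injection Hy as Hy.
  rewrite sumC_S. destruct m as [|m]; simpl upd; rewrite !sumC_sumL.
  - rewrite (sumL_ext _ _ (fun x => if st_eq_dec a s then
        (if config_eq_dec x y then h (Sus :: x) + h (Inf :: x) + h (Rem :: x) else 0) else 0)).
    2:{ intros x _. rewrite !config_eq_dec_cons.
        destruct (st_eq_dec a s), (config_eq_dec y x), (config_eq_dec x y); subst; try congruence; lra. }
    unfold node; simpl. destruct (st_eq_dec a s).
    + apply (sumC_delta n y (fun x => h (Sus :: x) + h (Inf :: x) + h (Rem :: x))).
      apply all_configs_length; auto.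
    + apply sumL_zero; auto.
  - rewrite (sumL_ext _ _ (fun x => if config_eq_dec y (upd x m s) then h (a :: x) else 0)).
    2:{ intros x _. rewrite !config_eq_dec_cons.
        destruct a; simpl; destruct (config_eq_dec y (upd x m s)); lra. }
    rewrite <- sumC_sumL, IH by lia. reflexivity.
Qed.

Section Chain.
Variables (N : nat) (T : nat -> nat -> R) (gamma : nat -> R).

(* [pred_config y m] is the configuration from which a transition of node [m] leads to [y],
   and [in_rate y m] the rate of that transition; no transition makes a node susceptible,
   hence the junk value [y] with rate [0] in that case. *)
Definition pred_config (y : config) (m : nat) : config :=
  match node y m with Sus => y | Inf => upd y m Sus | Rem => upd y m Inf end.

Definition in_rate (y : config) (m : nat) : R :=
  match node y m with Sus => 0 | Inf => inf_rate N T (upd y m Sus) m | Rem => gamma m end.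

Lemma pred_config_in y m : In y (all_configs N) -> In (pred_config y m) (all_configs N).
Proof. intros H; unfold pred_config; destruct (node y m); auto; apply upd_in; auto. Qed.

Lemma indS_upd y i s : (i < length y)%nat -> indS i (upd y i s) = match s with Sus => 1 | _ => 0 end.
Proof. intros; unfold indS; rewrite node_upd by auto; destruct (Nat.eq_dec i i); [|lia]; auto. Qed.

Lemma indI_upd y i s : (i < length y)%nat -> indI i (upd y i s) = match s with Inf => 1 | _ => 0 end.
Proof. intros; unfold indI; rewrite node_upd by auto; destruct (Nat.eq_dec i i); [|lia]; auto. Qed.

Lemma sumC_rate_in (q : config -> R) y : In y (all_configs N) ->
  sumC N (fun x => q x * rate N T gamma x y) = sumV N (fun m => in_rate y m * q (pred_config y m)).
Proof.
  intros Hy. apply all_configs_length in Hy. unfold rate.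
  rewrite !sumC_sumL, sumV_sumL, (sumL_ext _ _ (fun x => sumL (seq 0 N) (fun i =>
     (if config_eq_dec y (upd x i Inf) then q x * (indS i x * inf_rate N T x i) else 0)
   + (if config_eq_dec y (upd x i Rem) then q x * (indI i x * gamma i) else 0)))).
  2:{ intros x _. rewrite !sumV_sumL, <- sumL_scal. apply sumL_ext; intros i _.
      destruct (config_eq_dec y (upd x i Inf)), (config_eq_dec y (upd x i Rem)); lra. }
  rewrite sumL_swap. apply sumL_ext; intros m Hm. apply in_seq in Hm.
  rewrite sumL_plus, <- !sumC_sumL, !sumC_upd_preimage by lia.
  unfold in_rate, pred_config.
  rewrite !indS_upd, !indI_upd by lia.
  destruct (node y m); simpl; lra.
Qed.

Lemma master_eq_backward (p : R -> config -> R) : master_eq N T gamma p ->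
  forall t y, In y (all_configs N) ->
  derivable_pt_lim (fun s => p s y) t
    (sumV N (fun m => in_rate y m * p t (pred_config y m)) - out_rate N T gamma y * p t y).
Proof. intros H t y Hy. rewrite Rmult_comm, <- sumC_rate_in by auto. apply H; auto. Qed.

Definition generator (f : config -> R) (x : config) : R :=
  sumV N (fun i => indS i x * inf_rate N T x i * (f (upd x i Inf) - f x)
                 + indI i x * gamma i * (f (upd x i Rem) - f x)).

Lemma sumC_rate_out (f : config -> R) x : In x (all_configs N) ->
  sumC N (fun y => rate N T gamma x y * f y) =
  sumV N (fun i => indS i x * inf_rate N T x i * f (upd x i Inf) + indI i x * gamma i * f (upd x i Rem)).
Proof.
  intros Hx. unfold rate.
  rewrite !sumC_sumL, sumV_sumL, (sumL_ext _ _ (fun y => sumL (seq 0 N) (fun i =>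
     (if config_eq_dec y (upd x i Inf) then indS i x * inf_rate N T x i * f y else 0)
   + (if config_eq_dec y (upd x i Rem) then indI i x * gamma i * f y else 0)))).
  2:{ intros y _. rewrite !sumV_sumL, <- sumL_scalr. apply sumL_ext; intros i _.
      destruct (config_eq_dec y (upd x i Inf)), (config_eq_dec y (upd x i Rem)); lra. }
  rewrite sumL_swap. apply sumL_ext; intros m _.
  rewrite sumL_plus, <- !sumC_sumL, !sumC_delta by (apply upd_in; auto). reflexivity.
Qed.

Lemma expect_derivative (p : R -> config -> R) (f : config -> R) t : master_eq N T gamma p ->
  derivable_pt_lim (fun s => expect N p s f) t (expect N p t (generator f)).
Proof.
  intros H. unfold expect.
  replace (sumC N (fun x => p t x * generator f x)) with (sumC N (fun y =>
    (sumC N (fun x => p t x * rate N T gamma x y) - p t y * out_rate N T gamma y) * f y)).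
  - apply (derivable_pt_lim_sumL _ (fun s y => p s y * f y)). intros y Hy.
    apply derivable_pt_lim_mult_const, H; auto.
  - rewrite !sumC_sumL.
    rewrite (sumL_ext _ _ (fun y => sumL (all_configs N) (fun x => p t x * (rate N T gamma x y * f y))
                                   - p t y * out_rate N T gamma y * f y)).
    2:{ intros y _. rewrite Rmult_minus_distr_r, sumC_sumL, <- sumL_scalr. f_equal.
        apply sumL_ext; intros; ring. }
    rewrite sumL_minus, sumL_swap, <- sumL_minus.
    apply sumL_ext; intros x Hx.
    rewrite sumL_scal, <- sumC_sumL, sumC_rate_out by auto. unfold generator, out_rate.
    rewrite !sumV_sumL, Rmult_assoc, <- sumL_scalr, <- Rmult_minus_distr_l, <- sumL_minus.
    f_equal. apply sumL_ext; intros; ring.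
Qed.

End Chain.

Lemma gronwall_zero (V dV : R -> R) K :
  (forall t, derivable_pt_lim V t (dV t)) ->
  (forall t, 0 <= t -> dV t <= K * V t) ->
  (forall t, 0 <= t -> 0 <= V t) -> V 0 = 0 ->
  forall t, 0 <= t -> V t = 0.
Proof.
  intros HD Hle Hnn H0 t Ht.
  (* [V s * exp (- K s)] is nonnegative, nonincreasing and vanishes at [0]. *)
  set (g := fun s => V s * exp (- K * s)).
  set (dg := fun s => dV s * exp (- K * s) + V s * (exp (- K * s) * (- K))).
  assert (Hg : forall s, derivable_pt_lim g s (dg s)).
  { intros s. apply (derivable_pt_lim_mult V (fun s => exp (- K * s))); auto.
    apply (derivable_pt_lim_comp (fun s => - K * s) exp); [|apply derivable_pt_lim_exp].
    pose proof (derivable_pt_lim_scal (fun s => s) (- K) s 1 (derivable_pt_lim_id s)) as HK.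
    rewrite Rmult_1_r in HK. exact HK. }
  assert (pr : derivable g) by (intros s; exists (dg s); apply Hg).
  destruct (Req_dec t 0) as [->|Hne]; [auto|].
  destruct (MVT_cor1 g 0 t pr) as [s [Hs Hs']]; [lra|].
  rewrite (derive_pt_eq_0 g s (dg s) (pr s) (Hg s)) in Hs.
  assert (dg s <= 0).
  { unfold dg. assert (Hk := Hle s ltac:(lra)). assert (0 < exp (- K * s)) by apply exp_pos. nra. }
  assert (g 0 = 0) by (unfold g; rewrite H0; ring).
  unfold g in *. assert (0 < exp (- K * t)) by apply exp_pos.
  assert (0 <= V t) by (apply Hnn; lra). nra.
Qed.

Definition neg_part_sq (z : R) : R := Rmin z 0 * Rmin z 0.

Lemma neg_part_sq_nonneg z : 0 <= neg_part_sq z.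
Proof. unfold neg_part_sq; nra. Qed.

Lemma derivable_pt_lim_neg_part_sq z : derivable_pt_lim neg_part_sq z (2 * Rmin z 0).
Proof.
  intros eps Heps. exists (mkposreal (eps / 4) ltac:(lra)). intros h Hh0 Hh. simpl in Hh.
  assert (Hb : Rabs (neg_part_sq (z + h) - neg_part_sq z - 2 * Rmin z 0 * h) <= 2 * (h * h)).
  { unfold neg_part_sq, Rmin.
    destruct (Rle_dec (z + h) 0), (Rle_dec z 0); apply Rabs_le; split; nra. }
  replace ((neg_part_sq (z + h) - neg_part_sq z) / h - 2 * Rmin z 0) with
    ((neg_part_sq (z + h) - neg_part_sq z - 2 * Rmin z 0 * h) / h) by (field; auto).
  unfold Rdiv. rewrite Rabs_mult, Rabs_inv.
  assert (Ha : 0 < Rabs h) by (apply Rabs_pos_lt; auto).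
  rewrite <- (Rabs_right (h * h)), Rabs_mult in Hb by nra.
  apply Rle_lt_trans with (2 * Rabs h); [|lra].
  replace (2 * Rabs h) with (2 * (Rabs h * Rabs h) * / Rabs h) by (field; lra).
  apply Rmult_le_compat_r; [left; apply Rinv_0_lt_compat|]; auto.
Qed.

Lemma neg_part_cross a b k : 0 <= k -> 2 * Rmin a 0 * (k * b) <= k * (neg_part_sq a + neg_part_sq b).
Proof.
  intros Hk. unfold neg_part_sq, Rmin. destruct (Rle_dec a 0), (Rle_dec b 0).
  - assert (0 <= k * ((a - b) * (a - b))) by (apply Rmult_le_pos; [lra|apply Rle_0_sqr]). nra.
  - assert (0 <= k * (- a * b)) by (apply Rmult_le_pos; nra).
    assert (0 <= k * (a * a)) by (apply Rmult_le_pos; nra). nra.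
  - assert (0 <= k * (b * b)) by (apply Rmult_le_pos; nra). nra.
  - nra.
Qed.

Lemma neg_part_drift {J} (js : list J) (k : J -> R) (v : J -> R) (d u V : R) :
  0 <= d -> (forall j, In j js -> 0 <= k j) ->
  neg_part_sq u <= V -> (forall j, In j js -> neg_part_sq (v j) <= V) ->
  2 * Rmin u 0 * (sumL js (fun j => k j * v j) - d * u) <= sumL js (fun j => k j * (2 * V)).
Proof.
  intros Hd Hk Hu Hv.
  assert (0 <= 2 * Rmin u 0 * (d * u)).
  { replace (2 * Rmin u 0 * (d * u)) with (2 * d * (Rmin u 0 * u)) by ring.
    apply Rmult_le_pos; [lra|]. unfold Rmin; destruct (Rle_dec u 0); nra. }
  rewrite Rmult_minus_distr_l, <- sumL_scal.
  apply Rle_trans with (sumL js (fun j => 2 * Rmin u 0 * (k j * v j))); [lra|].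
  apply sumL_le; intros j Hj.
  apply Rle_trans with (k j * (neg_part_sq u + neg_part_sq (v j))).
  - apply neg_part_cross; auto.
  - apply Rmult_le_compat_l; auto. specialize (Hv j Hj). lra.
Qed.

Section CooperativeSystem.
Context {I J : Type}.
Variables (l : list I) (js : list J) (next : I -> J -> I) (c : I -> J -> R) (d : I -> R).
Hypothesis next_in : forall a j, In a l -> In j js -> In (next a j) l.
Hypothesis c_nonneg : forall a j, In a l -> In j js -> 0 <= c a j.
Hypothesis d_nonneg : forall a, In a l -> 0 <= d a.

Definition solves_coop (u : R -> I -> R) : Prop :=
  forall t a, In a l ->
    derivable_pt_lim (fun s => u s a) t (sumL js (fun j => c a j * u t (next a j)) - d a * u t a).

Lemma coop_nonneg u : solves_coop u -> (forall a, In a l -> 0 <= u 0 a) ->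
  forall t, 0 <= t -> forall a, In a l -> 0 <= u t a.
Proof.
  intros Hu H0.
  (* the sum of the squared negative parts satisfies a Gronwall inequality *)
  set (V := fun t => sumL l (fun a => neg_part_sq (u t a))).
  assert (HVterm : forall t a, In a l -> neg_part_sq (u t a) <= V t).
  { intros t a Ha. apply (sumL_term l (fun a => neg_part_sq (u t a))); auto.
    intros; apply neg_part_sq_nonneg. }
  assert (HV : forall t, 0 <= t -> V t = 0).
  { apply (gronwall_zero V
      (fun t => sumL l (fun a => 2 * Rmin (u t a) 0 *
                  (sumL js (fun j => c a j * u t (next a j)) - d a * u t a)))
      (2 * sumL l (fun a => sumL js (c a)))).
    - intros t. apply (derivable_pt_lim_sumL l (fun s a => neg_part_sq (u s a))). intros a Ha.
      apply (derivable_pt_lim_comp (fun s => u s a) neg_part_sq); auto.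
      apply derivable_pt_lim_neg_part_sq.
    - intros t _.
      replace (2 * sumL l (fun a => sumL js (c a)) * V t)
        with (sumL l (fun a => sumL js (fun j => c a j * (2 * V t)))).
      + apply sumL_le; intros a Ha. apply neg_part_drift; auto.
      + rewrite (sumL_ext l _ (fun a => sumL js (c a) * (2 * V t))) by (intros; apply sumL_scalr).
        rewrite sumL_scalr; ring.
    - intros t _. apply sumL_nonneg; intros; apply neg_part_sq_nonneg.
    - apply sumL_zero; intros a Ha. unfold neg_part_sq, Rmin.
      destruct (Rle_dec (u 0 a) 0); [|ring]. assert (0 <= u 0 a) by auto. nra. }
  intros t Ht a Ha. assert (Hn := HVterm t a Ha). rewrite HV in Hn by auto.
  unfold neg_part_sq, Rmin in Hn. destruct (Rle_dec (u t a) 0); nra.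
Qed.

Lemma coop_zero u : solves_coop u -> (forall a, In a l -> u 0 a = 0) ->
  forall t, 0 <= t -> forall a, In a l -> u t a = 0.
Proof.
  intros Hu H0 t Ht a Ha.
  assert (Hopp : solves_coop (fun s a => - u s a)).
  { intros s b Hb. rewrite sumL_ext with (g := fun j => - (c b j * u s (next b j))) by (intros; ring).
    rewrite sumL_opp. replace (- _ - d b * - u s b) with (- (sumL js (fun j => c b j * u s (next b j)) - d b * u s b)) by ring.
    apply (derivable_pt_lim_opp (fun s => u s b)), Hu; auto. }
  assert (0 <= u t a) by (apply (coop_nonneg u); auto; intros b Hb; rewrite H0; auto; lra).
  assert (0 <= - u t a) by (apply (coop_nonneg (fun s a => - u s a)); auto; intros b Hb; rewrite H0; auto; lra).
  lra.
Qed.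

End CooperativeSystem.

Section Positivity.
Variables (N : nat) (T : nat -> nat -> R) (gamma : nat -> R).
Hypothesis HT : forall i j, (i < N)%nat -> (j < N)%nat -> 0 <= T i j.
Hypothesis Hgamma : forall i, (i < N)%nat -> 0 < gamma i.

Lemma indS_bounds i x : 0 <= indS i x <= 1.
Proof. unfold indS; destruct (node x i); lra. Qed.

Lemma indS_cases z x : indS z x = 0 \/ (indS z x = 1 /\ node x z = Sus).
Proof. unfold indS. destruct (node x z); auto. Qed.

Lemma indI_bounds i x : 0 <= indI i x <= 1.
Proof. unfold indI; destruct (node x i); lra. Qed.

Lemma inf_rate_nonneg x m : (m < N)%nat -> 0 <= inf_rate N T x m.
Proof.
  intros Hm. unfold inf_rate. rewrite sumV_sumL. apply sumL_nonneg; intros k Hk.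
  apply in_seq in Hk. apply Rmult_le_pos; [apply HT; lia|apply indI_bounds].
Qed.

Lemma in_rate_nonneg y m : (m < N)%nat -> 0 <= in_rate N T gamma y m.
Proof.
  intros Hm. unfold in_rate. destruct (node y m); [lra|apply inf_rate_nonneg; auto|].
  left; apply Hgamma; auto.
Qed.

Lemma out_rate_nonneg y : 0 <= out_rate N T gamma y.
Proof.
  unfold out_rate. rewrite sumV_sumL. apply sumL_nonneg; intros k Hk. apply in_seq in Hk.
  assert (0 <= indS k y * inf_rate N T y k)
    by (apply Rmult_le_pos; [apply indS_bounds|apply inf_rate_nonneg; lia]).
  assert (0 <= indI k y * gamma k) by (apply Rmult_le_pos; [apply indI_bounds|left; apply Hgamma; lia]).
  lra.
Qed.

Lemma prob_nonneg (p : R -> config -> R) (pi : nat -> st -> R) :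
  master_eq N T gamma p -> indep_init N pi p ->
  forall t, 0 <= t -> forall y, In y (all_configs N) -> 0 <= p t y.
Proof.
  intros HM [Hpi [_ H0]].
  apply (coop_nonneg (all_configs N) (seq 0 N) pred_config (in_rate N T gamma) (out_rate N T gamma)).
  - intros; apply pred_config_in; auto.
  - intros y m _ Hm. apply in_rate_nonneg. apply in_seq in Hm; lia.
  - intros; apply out_rate_nonneg.
  - intros t y Hy. apply master_eq_backward; auto.
  - intros x Hx. rewrite H0 by auto.
    assert (Hl : forall i, In i (seq 0 N) -> (i < N)%nat) by (intros i Hi; apply in_seq in Hi; lia).
    clear - Hpi Hl. induction (seq 0 N) as [|i l IH]; simpl; [lra|].
    apply Rmult_le_pos; [apply Hpi, Hl; simpl; auto|apply IH; intros; apply Hl; simpl; auto].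
Qed.

End Positivity.

Lemma fold_right_Rmult_map_mult {A} (l : list A) (f g : A -> R) :
  fold_right Rmult 1 (map f l) * fold_right Rmult 1 (map g l) =
  fold_right Rmult 1 (map (fun a => f a * g a) l).
Proof. induction l as [|a l IH]; simpl; [ring|]. rewrite <- IH. ring. Qed.

Lemma NoDup_list_prod {A B} (l : list A) (l' : list B) :
  NoDup l -> NoDup l' -> NoDup (list_prod l l').
Proof.
  induction 1 as [|a l Ha Hl IH]; intros Hl'; simpl; [constructor|].
  apply NoDup_app; auto.
  - apply FinFun.Injective_map_NoDup; auto. intros b b' E; injection E; auto.
  - intros [a' b] H1 H2. apply in_map_iff in H1 as [b0 [E _]]. injection E as <- <-.
    apply in_prod_iff in H2 as [H2 _]. contradiction.
Qed.

(* Exchanging the [A]-parts of two configurations is an involution of the pairs. *)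
Lemma sumC2_mix_swap n A (K : config -> config -> R) :
  sumC n (fun x => sumC n (fun y => K (mix A x y) (mix A y x))) =
  sumC n (fun x => sumC n (fun y => K x y)).
Proof.
  set (C := all_configs n).
  set (swap := fun xy : config * config => (mix A (fst xy) (snd xy), mix A (snd xy) (fst xy))).
  assert (Hlen : forall xy, In xy (list_prod C C) -> length (fst xy) = length (snd xy)).
  { intros [x y] H. apply in_prod_iff in H as [Hx Hy].
    apply all_configs_length in Hx, Hy. simpl; congruence. }
  assert (Hinv : forall xy, In xy (list_prod C C) -> swap (swap xy) = xy).
  { intros [x y] H. specialize (Hlen _ H). simpl in Hlen. unfold swap; simpl.
    rewrite !mix_involutive; auto. }
  transitivity (sumL (list_prod C C) (fun xy => K (fst (swap xy)) (snd (swap xy))));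
    [rewrite sumL_list_prod; reflexivity|].
  transitivity (sumL (list_prod C C) (fun xy => K (fst xy) (snd xy)));
    [|rewrite sumL_list_prod; reflexivity].
  transitivity (sumL (map swap (list_prod C C)) (fun xy => K (fst xy) (snd xy)));
    [rewrite sumL_map; reflexivity|]. apply sumL_Permutation, Permutation_map_same_l.
  - apply FinFun.Injective_map_NoDup_in; [|apply NoDup_list_prod; apply all_configs_NoDup].
    intros a b Ha Hb E. rewrite <- (Hinv a), <- (Hinv b), E; auto.
  - intros xy H. apply in_map_iff in H as [[x y] [<- H]].
    apply in_prod_iff in H as [Hx Hy]. apply in_prod; apply mix_in; auto.
Qed.

Lemma inf_rate_ext N T z z' m :
  (forall k, (k < N)%nat -> T m k = 0 \/ indI k z = indI k z') -> inf_rate N T z m = inf_rate N T z' m.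
Proof.
  intros H. unfold inf_rate. rewrite !sumV_sumL. apply sumL_ext; intros k Hk. apply in_seq in Hk.
  destruct (H k ltac:(lia)) as [E|E]; rewrite E; ring.
Qed.

Section Separation.
Variables (N : nat) (T : nat -> nat -> R) (gamma : nat -> R) (A : nat -> bool) (c : nat).
Hypothesis Hc : (c < N)%nat.
Hypothesis HAc : A c = false.
Hypothesis Hsep : forall m k, (m < N)%nat -> (k < N)%nat -> A m = true -> A k = false -> k <> c ->
  T m k = 0 /\ T k m = 0.
Hypothesis HT : forall i j, (i < N)%nat -> (j < N)%nat -> 0 <= T i j.
Hypothesis Hgamma : forall i, (i < N)%nat -> 0 < gamma i.

Definition good (x : config) : Prop := length x = N /\ node x c = Sus.

Lemma upd_good x m s : good x -> m <> c -> good (upd x m s).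
Proof.
  intros [Hx Hxc] Hm. split; [rewrite upd_length; auto|].
  destruct (Nat.lt_ge_cases m (length x)).
  - rewrite node_upd by auto. destruct (Nat.eq_dec c m); congruence.
  - rewrite upd_overflow by lia. auto.
Qed.

Lemma pred_config_good x m : good x -> good (pred_config x m).
Proof.
  intros Hg. unfold pred_config. destruct (Nat.eq_dec m c) as [->|Hm].
  - rewrite (proj2 Hg). auto.
  - destruct (node x m); auto; apply upd_good; auto.
Qed.

Lemma in_rate_good_c x : good x -> in_rate N T gamma x c = 0.
Proof. intros [_ H]; unfold in_rate; rewrite H; auto. Qed.

Lemma inf_rate_mix x y k : good x -> good y -> (k < N)%nat -> k <> c ->
  inf_rate N T (mix A x y) k = if A k then inf_rate N T x k else inf_rate N T y k.
Proof.
  intros [Hx Hxc] [Hy Hyc] Hk Hkc.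
  assert (HI : forall j, indI j (mix A x y) = if A j then indI j x else indI j y).
  { intros j. unfold indI. rewrite node_mix by congruence. destruct (A j); auto. }
  destruct (A k) eqn:Ak; apply inf_rate_ext; intros j Hj; rewrite HI;
    destruct (Nat.eq_dec j c) as [->|Hjc];
    try (right; rewrite HAc; unfold indI; rewrite ?Hxc, ?Hyc; reflexivity);
    destruct (A j) eqn:Aj; auto.
  - left. apply (Hsep k j); auto.
  - left. apply (Hsep j k); auto.
Qed.

Lemma in_rate_mix x y m : good x -> good y -> (m < N)%nat -> m <> c ->
  in_rate N T gamma (mix A x y) m = if A m then in_rate N T gamma x m else in_rate N T gamma y m.
Proof.
  intros Hgx Hgy Hm Hmc. pose proof Hgx as [Hx _]. pose proof Hgy as [Hy _].
  unfold in_rate. rewrite node_mix, upd_mix by congruence.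
  destruct (A m) eqn:Am; [destruct (node x m)|destruct (node y m)]; auto;
    rewrite inf_rate_mix, Am; auto; apply upd_good; auto.
Qed.

Lemma pred_config_mix x y m : length x = length y -> (m < length x)%nat ->
  pred_config (mix A x y) m = if A m then mix A (pred_config x m) y else mix A x (pred_config y m).
Proof.
  intros Hl Hm. unfold pred_config. rewrite node_mix by auto.
  destruct (A m) eqn:Am; [destruct (node x m)|destruct (node y m)];
    rewrite ?upd_mix, ?Am; auto.
Qed.

Lemma mix_pred_config_l x y m : A m = false -> (m < length x)%nat ->
  mix A (pred_config x m) y = mix A x y.
Proof. intros; unfold pred_config; destruct (node x m); auto; apply mix_upd_l; auto. Qed.

Lemma mix_pred_config_r x y m : A m = true -> (m < length y)%nat ->
  mix A x (pred_config y m) = mix A x y.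
Proof. intros; unfold pred_config; destruct (node y m); auto; apply mix_upd_r; auto. Qed.

Lemma out_rate_mix x y : good x -> good y ->
  out_rate N T gamma (mix A x y) + out_rate N T gamma (mix A y x) =
  out_rate N T gamma x + out_rate N T gamma y.
Proof.
  intros Hgx Hgy. pose proof Hgx as [Hx Hxc]. pose proof Hgy as [Hy Hyc].
  assert (HS : forall u v k, length u = length v ->
            indS k (mix A u v) = if A k then indS k u else indS k v).
  { intros u v k Hl. unfold indS. rewrite node_mix by auto. destruct (A k); auto. }
  assert (HI : forall u v k, length u = length v ->
            indI k (mix A u v) = if A k then indI k u else indI k v).
  { intros u v k Hl. unfold indI. rewrite node_mix by auto. destruct (A k); auto. }
  unfold out_rate. rewrite !sumV_sumL, <- !sumL_plus. apply sumL_ext; intros k Hk. apply in_seq in Hk.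
  rewrite !HS, !HI by congruence.
  destruct (Nat.eq_dec k c) as [->|Hkc].
  - (* at the separator the infection pressure is additive in the two configurations *)
    assert (Hsum : inf_rate N T (mix A x y) c + inf_rate N T (mix A y x) c =
                   inf_rate N T x c + inf_rate N T y c).
    { unfold inf_rate. rewrite !sumV_sumL, <- !sumL_plus. apply sumL_ext; intros j _.
      rewrite !HI by congruence. destruct (A j); ring. }
    rewrite HAc. unfold indS, indI. rewrite Hxc, Hyc. lra.
  - rewrite !inf_rate_mix by (auto; lia). destruct (A k); ring.
Qed.

Definition mix_defect (q : config -> R) (x y : config) : R :=
  q x * q y - q (mix A x y) * q (mix A y x).

Lemma mix_defect_step (q : config -> R) x y m : good x -> good y -> (m < N)%nat ->
  let a z := in_rate N T gamma z m * q (pred_config z m) in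
  a x * q y + q x * a y - a (mix A x y) * q (mix A y x) - q (mix A x y) * a (mix A y x)
  = in_rate N T gamma x m * mix_defect q (pred_config x m) y
    + in_rate N T gamma y m * mix_defect q x (pred_config y m).
Proof.
  intros Hgx Hgy Hm a. pose proof Hgx as [Hx _]. pose proof Hgy as [Hy _]. unfold a, mix_defect.
  destruct (Nat.eq_dec m c) as [->|Hmc].
  { assert (Hmix : forall u v, good u -> good v -> good (mix A u v)).
    { intros u v [Hu Huc] [Hv Hvc]. split; [rewrite mix_length; auto|].
      rewrite node_mix, HAc by congruence. auto. }
    rewrite !in_rate_good_c by auto. ring. }
  rewrite !in_rate_mix, !pred_config_mix by (auto; congruence).
  destruct (A m) eqn:Am.
  - rewrite (mix_pred_config_r y x), (mix_pred_config_r x y) by (auto; lia). ring.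
  - rewrite (mix_pred_config_l y x), (mix_pred_config_l x y) by (auto; lia). ring.
Qed.

Definition good_configs : list config :=
  filter (fun x => if st_eq_dec (node x c) Sus then true else false) (all_configs N).

Lemma good_configs_spec x : In x good_configs <-> good x.
Proof.
  unfold good_configs, good. rewrite filter_In, all_configs_length.
  destruct (st_eq_dec (node x c) Sus); intuition discriminate.
Qed.

(* The defects of pairs of good configurations obey a cooperative linear system:
   a transition of either component is a move [(b, m)], [b] telling which one. *)
Definition pair_next (xy : config * config) (bm : bool * nat) : config * config :=
  if fst bm then (pred_config (fst xy) (snd bm), snd xy) else (fst xy, pred_config (snd xy) (snd bm)).

Definition pair_in_rate (xy : config * config) (bm : bool * nat) : R :=
  if fst bm then in_rate N T gamma (fst xy) (snd bm) else in_rate N T gamma (snd xy) (snd bm).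

Definition pair_out_rate (xy : config * config) : R :=
  out_rate N T gamma (fst xy) + out_rate N T gamma (snd xy).

Lemma mix_defect_derivative (p : R -> config -> R) : master_eq N T gamma p ->
  solves_coop (list_prod good_configs good_configs) (list_prod [true; false] (seq 0 N))
    pair_next pair_in_rate pair_out_rate (fun t xy => mix_defect (p t) (fst xy) (snd xy)).
Proof.
  intros HM t [x y] Hxy. apply in_prod_iff in Hxy as [Hgx Hgy].
  apply good_configs_spec in Hgx, Hgy. simpl fst; simpl snd.
  assert (Hin : forall z, length z = N -> In z (all_configs N)) by (intros; apply all_configs_length; auto).
  pose proof Hgx as [Hx _]. pose proof Hgy as [Hy _].
  set (S z := sumV N (fun m => in_rate N T gamma z m * p t (pred_config z m))).
  set (o := out_rate N T gamma).
  assert (Hd : forall z, length z = N -> derivable_pt_lim (fun s => p s z) t (S z - o z * p t z))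
    by (intros; apply master_eq_backward; auto).
  assert (Hmxy : length (mix A x y) = N) by (rewrite mix_length; auto).
  assert (Hmyx : length (mix A y x) = N) by (rewrite mix_length; auto).
  assert (HS : S x * p t y + p t x * S y - S (mix A x y) * p t (mix A y x) - p t (mix A x y) * S (mix A y x)
             = sumV N (fun m => in_rate N T gamma x m * mix_defect (p t) (pred_config x m) y
                              + in_rate N T gamma y m * mix_defect (p t) x (pred_config y m))).
  { unfold S. rewrite !sumV_sumL, <- !sumL_scalr, <- !sumL_scal, <- !sumL_plus, <- !sumL_minus.
    apply sumL_ext; intros m Hm. apply in_seq in Hm.
    pose proof (mix_defect_step (p t) x y m Hgx Hgy ltac:(lia)) as Hstep. cbv zeta in Hstep. lra. }
  assert (Ho := out_rate_mix x y Hgx Hgy). fold o in Ho.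
  rewrite sumL_list_prod, !sumL_cons. change (sumL [] _) with 0.
  unfold pair_in_rate, pair_next, pair_out_rate. cbn [fst snd]. fold o.
  rewrite Rplus_0_r, <- sumL_plus, <- sumV_sumL, <- HS.
  match goal with |- derivable_pt_lim _ _ ?v => replace v with
    ((S x - o x * p t x) * p t y + p t x * (S y - o y * p t y)
     - ((S (mix A x y) - o (mix A x y) * p t (mix A x y)) * p t (mix A y x)
        + p t (mix A x y) * (S (mix A y x) - o (mix A y x) * p t (mix A y x)))) end.
  - apply (derivable_pt_lim_minus (fun s => p s x * p s y) (fun s => p s (mix A x y) * p s (mix A y x)));
      apply (derivable_pt_lim_mult (fun s => p s _) (fun s => p s _)); auto.
  - replace (o (mix A x y)) with (o x + o y - o (mix A y x)) by lra.
    unfold mix_defect. ring.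
Qed.

Lemma mix_defect_zero (p : R -> config -> R) (pi : nat -> st -> R) :
  master_eq N T gamma p -> indep_init N pi p ->
  forall t, 0 <= t -> forall x y, good x -> good y -> mix_defect (p t) x y = 0.
Proof.
  intros HM [_ [_ H0]] t Ht x y Hx Hy.
  apply (coop_zero (list_prod good_configs good_configs) (list_prod [true; false] (seq 0 N))
           pair_next pair_in_rate pair_out_rate) with
    (u := fun t xy => mix_defect (p t) (fst xy) (snd xy)) (a := (x, y)); auto.
  - intros [x' y'] [b m] H _. apply in_prod_iff in H as [H1 H2].
    rewrite good_configs_spec in H1, H2.
    destruct b; apply in_prod; apply good_configs_spec; simpl; auto; apply pred_config_good; auto.
  - intros xy [b m] _ Hm. apply in_prod_iff in Hm as [_ Hm]. apply in_seq in Hm.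
    unfold pair_in_rate. destruct b; apply in_rate_nonneg; auto; simpl; lia.
  - intros xy _. unfold pair_out_rate.
    pose proof (out_rate_nonneg N T gamma HT Hgamma (fst xy)).
    pose proof (out_rate_nonneg N T gamma HT Hgamma (snd xy)). lra.
  - apply mix_defect_derivative; auto.
  - (* initially the node states are independent, so the defect vanishes identically *)
    intros [x' y'] H. apply in_prod_iff in H as [H1 H2].
    rewrite good_configs_spec in H1, H2. destruct H1 as [Hx' _], H2 as [Hy' _].
    simpl. unfold mix_defect.
    rewrite !H0 by (apply all_configs_length; rewrite ?mix_length; auto).
    rewrite !fold_right_Rmult_map_mult.
    rewrite (map_ext (fun i => pi i (node (mix A x' y') i) * pi i (node (mix A y' x') i))
                     (fun i => pi i (node x' i) * pi i (node y' i))); [ring|].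
    intros i. rewrite !node_mix by congruence. destruct (A i); ring.
  - apply in_prod; apply good_configs_spec; auto.
Qed.

Lemma expect_factorization (p : R -> config -> R) (pi : nat -> st -> R) t (f g : config -> R) :
  master_eq N T gamma p -> indep_init N pi p -> 0 <= t ->
  (forall x y, length x = N -> length y = N ->
     (forall k, (k < N)%nat -> A k = true -> node x k = node y k) -> f x = f y) ->
  (forall x y, length x = N -> length y = N ->
     (forall k, (k < N)%nat -> A k = false -> node x k = node y k) -> g x = g y) ->
  expect N p t (fun x => indS c x * f x * g x) * expect N p t (indS c) =
  expect N p t (fun x => indS c x * f x) * expect N p t (fun x => indS c x * g x).
Proof.
  intros HM HI Ht Hf Hg. unfold expect. rewrite !sumC_sumL, <- !sumL_scalr.
  rewrite (sumL_ext _
    (fun x => p t x * (indS c x * f x) * sumL (all_configs N) (fun y => p t y * (indS c y * g y)))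
    (fun x => sumC N (fun y => p t x * (indS c x * f x) * (p t y * (indS c y * g y))))).
  2:{ intros x _. rewrite sumC_sumL, <- sumL_scal. reflexivity. }
  rewrite <- (sumC_sumL N (fun x => sumC N (fun y => p t x * (indS c x * f x) * (p t y * (indS c y * g y))))).
  rewrite <- (sumC2_mix_swap N A (fun x y => p t x * (indS c x * f x) * (p t y * (indS c y * g y)))).
  rewrite sumC_sumL. apply sumL_ext; intros x Hx. rewrite <- sumL_scal, sumC_sumL.
  apply sumL_ext; intros y Hy. apply all_configs_length in Hx, Hy.
  assert (Hnode : forall k, node (mix A x y) k = if A k then node x k else node y k)
    by (intros; apply node_mix; congruence).
  assert (Hnode' : forall k, node (mix A y x) k = if A k then node y k else node x k)
    by (intros; apply node_mix; congruence).
  rewrite (Hf (mix A x y) x), (Hg (mix A y x) x) by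
    (rewrite ?mix_length; auto; intros k _ Ak; rewrite ?Hnode, ?Hnode', Ak; auto).
  replace (indS c (mix A x y)) with (indS c y) by (unfold indS; rewrite Hnode, HAc; auto).
  replace (indS c (mix A y x)) with (indS c x) by (unfold indS; rewrite Hnode', HAc; auto).
  destruct (indS_cases c x) as [->|[-> Hxc]]; [ring|].
  destruct (indS_cases c y) as [->|[-> Hyc]]; [ring|].
  assert (HW := mix_defect_zero p pi HM HI t Ht x y (conj Hx Hxc) (conj Hy Hyc)).
  unfold mix_defect in HW.
  replace (p t (mix A x y) * (1 * f x) * (p t (mix A y x) * (1 * g x)))
    with ((p t (mix A x y) * p t (mix A y x)) * (f x * g x)) by ring.
  replace (p t (mix A x y) * p t (mix A y x)) with (p t x * p t y) by lra. ring.
Qed.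

End Separation.

Lemma last_cons {B} (a d : B) l : last (a :: l) d = last l a.
Proof.
  revert a d; induction l as [|x l IH]; intros a d; [reflexivity|].
  change (last (x :: l) d = last (x :: l) a). rewrite !IH. reflexivity.
Qed.

Lemma last_in {B} (a : B) l : In (last l a) (a :: l).
Proof.
  revert a; induction l as [|x l IH]; intros a; [simpl; auto|].
  rewrite last_cons. right. apply IH.
Qed.

Lemma chain_app_l T l1 l2 : chain T (l1 ++ l2) -> chain T l1.
Proof.
  induction l1 as [|a l1 IH]; intros H; [exact I|].
  destruct l1 as [|b l1]; [exact I|]. destruct H as [H1 H2]. split; [auto|apply IH, H2].
Qed.

Lemma chain_snoc T a l b : chain T (a :: l) -> adj T (last l a) b -> chain T (a :: l ++ [b]).
Proof.
  revert a; induction l as [|x l IH]; intros a H Hadj; [split; auto; exact I|].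
  destruct H as [H1 H2]. rewrite last_cons in Hadj. split; [exact H1|apply IH; auto].
Qed.

Section Branch.
Variables (N : nat) (T : nat -> nat -> R) (c a : nat).
Hypothesis HT : forall i j, (i < N)%nat -> (j < N)%nat -> 0 <= T i j.
Hypothesis Htree : is_forest N T.
Hypothesis Hc : (c < N)%nat.
Hypothesis Ha : (a < N)%nat.
Hypothesis Hac : a <> c.
Hypothesis Hadj : adj T c a.

Definition reach_avoiding (m : nat) : Prop :=
  exists l, NoDup (a :: l) /\ (forall x, In x (a :: l) -> (x < N)%nat)
            /\ ~ In c (a :: l) /\ chain T (a :: l) /\ last l a = m.

Definition branch (m : nat) : bool :=
  if excluded_middle_informative (reach_avoiding m) then true else false.

Lemma reach_avoiding_start : reach_avoiding a.
Proof.
  exists []. repeat split; simpl; auto.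
  - repeat constructor; auto.
  - intros x [<-|[]]; auto.
  - intros [H|[]]; auto.
Qed.

Lemma branch_c : branch c = false.
Proof.
  unfold branch. destruct (excluded_middle_informative _) as [[l [_ [_ [Hn [_ Hl]]]]]|]; auto.
  exfalso. apply Hn. rewrite <- Hl. apply last_in.
Qed.

Lemma branch_a : branch a = true.
Proof.
  unfold branch. destruct (excluded_middle_informative _) as [|Hn]; auto.
  exfalso. apply Hn, reach_avoiding_start.
Qed.

Lemma reach_avoiding_step m k : reach_avoiding m -> (k < N)%nat -> k <> c -> adj T m k ->
  reach_avoiding k.
Proof.
  intros [l [Hnd [HN [Hnc [Hch Hl]]]]] Hk Hkc Hmk.
  destruct (in_dec Nat.eq_dec k (a :: l)) as [[<-|Hin]|Hin].
  - apply reach_avoiding_start.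
  - (* [k] is already on the path: cut the path there *)
    apply in_split in Hin as [l1 [l2 ->]].
    assert (Hsub : forall x, In x (a :: l1 ++ [k]) -> In x (a :: l1 ++ k :: l2)).
    { intros x [Hx|Hx]; [left; auto|right]. apply in_app_or in Hx as [Hx|[<-|[]]];
        apply in_or_app; simpl; auto. }
    exists (l1 ++ [k]). repeat split; auto.
    + rewrite app_comm_cons. rewrite app_comm_cons in Hnd.
      apply NoDup_app_remove_r with l2. rewrite <- app_assoc. exact Hnd.
    + apply (chain_app_l T (a :: l1 ++ [k]) l2). simpl. rewrite <- app_assoc. exact Hch.
    + apply last_last.
  - exists (l ++ [k]). repeat split.
    + rewrite app_comm_cons. apply NoDup_app; auto.
      * repeat constructor; auto.
      * intros x Hx [<-|[]]. contradiction.
    + intros x Hx. rewrite app_comm_cons in Hx. apply in_app_or in Hx as [Hx|[<-|[]]]; auto.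
    + intros Hx. rewrite app_comm_cons in Hx. apply in_app_or in Hx as [Hx|[Hx|[]]]; auto.
    + apply chain_snoc; auto. rewrite Hl. auto.
    + apply last_last.
Qed.

Lemma branch_separated m k : (m < N)%nat -> (k < N)%nat -> branch m = true -> branch k = false ->
  k <> c -> T m k = 0 /\ T k m = 0.
Proof.
  intros Hm Hk Bm Bk Hkc. unfold branch in Bm, Bk.
  destruct (excluded_middle_informative (reach_avoiding m)) as [Rm|]; [|discriminate].
  destruct (excluded_middle_informative (reach_avoiding k)) as [Rk|Rk]; [discriminate|].
  assert (Hnadj : ~ adj T m k) by (intros H; apply Rk, (reach_avoiding_step m k); auto).
  unfold adj in Hnadj. assert (0 <= T m k) by auto. assert (0 <= T k m) by auto.
  split; apply Rle_antisym; auto; apply Rnot_lt_le; intros Hlt; apply Hnadj; auto.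
Qed.

(* Another neighbour of [c] in the branch of [a] would close a cycle through [c]. *)
Lemma branch_neighbour k : (k < N)%nat -> k <> a -> T c k > 0 -> branch k = false.
Proof.
  intros Hk Hka Hck. unfold branch.
  destruct (excluded_middle_informative _) as [[l [Hnd [HN [Hnc [Hch Hl]]]]]|]; auto.
  exfalso. destruct l as [|y l]; [simpl in Hl; congruence|].
  apply (Htree c (a :: y :: l)).
  - constructor; auto.
  - intros x [<-|Hx]; auto.
  - simpl; lia.
  - split; auto.
  - rewrite last_cons, Hl. right. auto.
Qed.

End Branch.

Section Expectation.
Variables (N : nat) (p : R -> config -> R) (t : R).

Lemma expect_ext f g : (forall x, In x (all_configs N) -> f x = g x) -> expect N p t f = expect N p t g.
Proof. intros H. apply sumL_ext; intros x Hx. rewrite H; auto. Qed.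

Lemma expect_zero f : (forall x, In x (all_configs N) -> f x = 0) -> expect N p t f = 0.
Proof. intros H. apply sumL_zero; intros x Hx. rewrite H; auto; ring. Qed.

Lemma expect_minus f g : expect N p t (fun x => f x - g x) = expect N p t f - expect N p t g.
Proof. unfold expect. rewrite !sumC_sumL, <- sumL_minus. apply sumL_ext; intros; ring. Qed.

Lemma expect_opp f : expect N p t (fun x => - f x) = - expect N p t f.
Proof. unfold expect. rewrite !sumC_sumL, <- sumL_opp. apply sumL_ext; intros; ring. Qed.

Lemma expect_scal k f : expect N p t (fun x => k * f x) = k * expect N p t f.
Proof. unfold expect. rewrite !sumC_sumL, <- sumL_scal. apply sumL_ext; intros; ring. Qed.

Lemma expect_inf_rate T (h : config -> R) i :
  expect N p t (fun x => h x * inf_rate N T x i) = sumV N (fun k => T i k * expect N p t (fun x => h x * indI k x)).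
Proof.
  unfold expect, inf_rate. rewrite !sumC_sumL, sumV_sumL.
  rewrite (sumL_ext _ _ (fun x => sumL (seq 0 N) (fun k => T i k * (p t x * (h x * indI k x))))).
  2:{ intros x _. rewrite sumV_sumL, <- !sumL_scal. apply sumL_ext; intros; ring. }
  rewrite sumL_swap. apply sumL_ext; intros k _. rewrite sumL_scal. reflexivity.
Qed.

End Expectation.

Section Generator.
Variables (N : nat) (T : nat -> nat -> R) (gamma : nat -> R).

Lemma generator_eq f x G :
  (forall m, (m < N)%nat -> indS m x * inf_rate N T x m * (f (upd x m Inf) - f x)
                          + indI m x * gamma m * (f (upd x m Rem) - f x) = G m) ->
  generator N T gamma f x = sumV N G.
Proof.
  intros H. unfold generator. rewrite !sumV_sumL. apply sumL_ext; intros m Hm.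
  apply in_seq in Hm. apply H; lia.
Qed.

(* Each observable below involves one or two nodes, so only transitions of those nodes contribute. *)
Ltac node_cases :=
  intros; unfold indS, indI; rewrite ?node_upd by lia;
  repeat match goal with |- context [Nat.eq_dec ?u ?v] => destruct (Nat.eq_dec u v) end;
  subst; try lia;
  repeat match goal with |- context [node ?x ?u] => destruct (node x u) end; ring.

Lemma generator_indS i x : length x = N -> (i < N)%nat ->
  generator N T gamma (indS i) x = - (indS i x * inf_rate N T x i).
Proof.
  intros Hx Hi. rewrite <- (sumV_delta N i (- (indS i x * inf_rate N T x i))) by auto.
  apply generator_eq. node_cases.
Qed.

Lemma generator_indI i x : length x = N -> (i < N)%nat ->
  generator N T gamma (indI i) x = indS i x * inf_rate N T x i - gamma i * indI i x.
Proof.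
  intros Hx Hi. rewrite <- (sumV_delta N i (indS i x * inf_rate N T x i - gamma i * indI i x)) by auto.
  apply generator_eq. node_cases.
Qed.

Lemma generator_indS_indI i j x : length x = N -> (i < N)%nat -> (j < N)%nat -> i <> j ->
  generator N T gamma (fun y => indS i y * indI j y) x =
  indS i x * indS j x * inf_rate N T x j - indS i x * indI j x * inf_rate N T x i
  - gamma j * (indS i x * indI j x).
Proof.
  intros Hx Hi Hj Hij.
  rewrite (generator_eq _ _ (fun m =>
    (if Nat.eq_dec m i then - (indS i x * indI j x * inf_rate N T x i) else 0)
    + (if Nat.eq_dec m j then indS i x * indS j x * inf_rate N T x j - gamma j * (indS i x * indI j x) else 0)))
    by node_cases.
  rewrite sumV_sumL, sumL_plus, <- !sumV_sumL, !sumV_delta by auto. ring.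
Qed.

Lemma generator_indS_indS i j x : length x = N -> (i < N)%nat -> (j < N)%nat -> i <> j ->
  generator N T gamma (fun y => indS i y * indS j y) x =
  - (indS i x * indS j x * inf_rate N T x i) - indS i x * indS j x * inf_rate N T x j.
Proof.
  intros Hx Hi Hj Hij.
  rewrite (generator_eq _ _ (fun m =>
    (if Nat.eq_dec m i then - (indS i x * indS j x * inf_rate N T x i) else 0)
    + (if Nat.eq_dec m j then - (indS i x * indS j x * inf_rate N T x j) else 0)))
    by node_cases.
  rewrite sumV_sumL, sumL_plus, <- !sumV_sumL, !sumV_delta by auto. ring.
Qed.

End Generator.

Section Moments.
Variables (N : nat) (T : nat -> nat -> R) (gamma : nat -> R) (pi : nat -> st -> R) (p : R -> config -> R).
Hypothesis HT : forall i j, (i < N)%nat -> (j < N)%nat -> 0 <= T i j.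
Hypothesis HTii : forall i, (i < N)%nat -> T i i = 0.
Hypothesis Hgamma : forall i, (i < N)%nat -> 0 < gamma i.
Hypothesis Htree : is_forest N T.
Hypothesis Hmaster : master_eq N T gamma p.
Hypothesis Hinit : indep_init N pi p.
Variable t : R.
Hypothesis Ht : 0 <= t.

Notation E := (expect N p t).

(* Conditionally on [S_c], the state of a neighbour [a] of [c] is independent of that of
   any other neighbour [k] of [c], since [c] separates the branch of [a] from [k]. *)
Lemma triple_closure c a k (phi : config -> R) :
  (c < N)%nat -> (a < N)%nat -> (k < N)%nat -> a <> c -> adj T c a -> k <> a ->
  (forall x y, node x a = node y a -> phi x = phi y) -> (forall x, 0 <= phi x <= 1) ->
  T c k * E (fun x => indS c x * phi x * indI k x) =
  T c k * sdiv (E (fun x => indS c x * phi x) * E (fun x => indS c x * indI k x)) (E (indS c)).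
Proof.
  intros Hc Ha Hk Hac Hadj Hka Hphi Hphib.
  destruct (Req_dec (T c k) 0) as [Z|NZ]; [rewrite Z; ring|].
  assert (Hck : T c k > 0) by (assert (0 <= T c k) by auto; lra).
  assert (Hkc : k <> c) by (intros ->; apply NZ; auto).
  assert (Hfact := expect_factorization N T gamma (branch N T c a) c Hc (branch_c N T c a)
    (branch_separated N T c a HT Ha Hac) HT Hgamma p pi t phi (indI k) Hmaster Hinit Ht).
  unfold sdiv. destruct (Req_EM_T (E (indS c)) 0) as [E0|E0].
  - assert (Hpos := prob_nonneg N T gamma HT Hgamma p pi Hmaster Hinit t Ht).
    assert (0 <= E (fun x => indS c x * phi x * indI k x) <= E (indS c)).
    { unfold expect. rewrite !sumC_sumL. split.
      - apply sumL_nonneg; intros x Hx. apply Rmult_le_pos; auto.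
        pose proof (indS_bounds c x). pose proof (indI_bounds k x). pose proof (Hphib x).
        apply Rmult_le_pos; [apply Rmult_le_pos|]; lra.
      - apply sumL_le; intros x Hx. apply Rmult_le_compat_l; auto.
        pose proof (indS_bounds c x). pose proof (indI_bounds k x). pose proof (Hphib x).
        assert (0 <= phi x * indI k x <= 1) by (split; nra). nra. }
    replace (E (fun x => indS c x * phi x * indI k x)) with 0 by lra. ring.
  - rewrite <- Hfact; [field; auto| |].
    + intros x y _ _ H. apply Hphi, H; auto. apply branch_a; auto.
    + intros x y _ _ H. unfold indI. rewrite H; auto. apply (branch_neighbour N T c a Htree); auto.
Qed.

Lemma sum_triple_closure c a (phi : config -> R) :
  (c < N)%nat -> (a < N)%nat -> a <> c -> adj T c a ->
  (forall x y, node x a = node y a -> phi x = phi y) -> (forall x, 0 <= phi x <= 1) ->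
  sumV N (fun k => T c k * E (fun x => indS c x * phi x * indI k x)) =
  sumV N (fun k => if Nat.eq_dec k a then 0 else
           T c k * sdiv (E (fun x => indS c x * phi x) * E (fun x => indS c x * indI k x)) (E (indS c)))
  + T c a * E (fun x => indS c x * phi x * indI a x).
Proof.
  intros Hc Ha Hac Hadj Hphi Hphib. rewrite (sumV_split N a) by auto. f_equal.
  rewrite !sumV_sumL. apply sumL_ext; intros k Hk. apply in_seq in Hk.
  destruct (Nat.eq_dec k a); auto. apply (triple_closure c a k phi); auto; lia.
Qed.

Lemma indS_node_eq a x y : node x a = node y a -> indS a x = indS a y.
Proof. unfold indS; intros ->; reflexivity. Qed.

Lemma indI_node_eq a x y : node x a = node y a -> indI a x = indI a y.
Proof. unfold indI; intros ->; reflexivity. Qed.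

Lemma sum_closure_SS_I i j : (i < N)%nat -> (j < N)%nat -> i <> j -> adj T i j ->
  sumV N (fun k => T j k * E (fun x => indS i x * indS j x * indI k x)) =
  sumV N (fun k => if Nat.eq_dec k i then 0 else
           T j k * sdiv (E (fun x => indS i x * indS j x) * E (fun x => indS j x * indI k x)) (E (indS j))).
Proof.
  intros Hi Hj Hij Hadj.
  rewrite (expect_ext N p t (fun x => indS i x * indS j x)) with (g := fun x => indS j x * indS i x)
    by (intros; ring).
  rewrite (sumV_sumL N (fun k => T j k * _)).
  rewrite (sumL_ext _ _ (fun k => T j k * E (fun x => indS j x * indS i x * indI k x)))
    by (intros k _; rewrite (expect_ext N p t _ (fun x => indS j x * indS i x * indI k x)) by (intros; ring); auto).
  rewrite <- sumV_sumL, (sum_triple_closure j i (indS i)); auto.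
  - replace (E (fun x => indS j x * indS i x * indI i x)) with 0; [ring|].
    symmetry. apply expect_zero; intros x _. unfold indS, indI. destruct (node x i); ring.
  - unfold adj in *; tauto.
  - apply indS_node_eq.
  - intros; apply indS_bounds.
Qed.

Lemma sum_closure_SI_I i j : (i < N)%nat -> (j < N)%nat -> i <> j -> adj T i j ->
  sumV N (fun k => T i k * E (fun x => indS i x * indI j x * indI k x)) =
  sumV N (fun k => if Nat.eq_dec k j then 0 else
           T i k * sdiv (E (fun x => indS i x * indI k x) * E (fun x => indS i x * indI j x)) (E (indS i)))
  + T i j * E (fun x => indS i x * indI j x).
Proof.
  intros Hi Hj Hij Hadj.
  rewrite (sum_triple_closure i j (indI j)); auto;
    [|apply indI_node_eq|intros; apply indI_bounds].
  f_equal.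
  - rewrite !sumV_sumL. apply sumL_ext; intros k _. destruct (Nat.eq_dec k j); auto.
    rewrite (Rmult_comm (E (fun x => indS i x * indI j x))). reflexivity.
  - f_equal. apply expect_ext; intros x _. unfold indI. destruct (node x j); ring.
Qed.

Lemma expect_indS_indS_comm i j : E (fun x => indS j x * indS i x) = E (fun x => indS i x * indS j x).
Proof. apply expect_ext; intros; ring. Qed.

Lemma deriv_expect_indS i : (i < N)%nat ->
  derivable_pt_lim (fun s => expect N p s (indS i)) t
    (- sumV N (fun j => T i j * E (fun x => indS i x * indI j x))).
Proof.
  intros Hi. rewrite <- expect_inf_rate, <- expect_opp.
  rewrite (expect_ext N p t _ (generator N T gamma (indS i)))
    by (intros x Hx; apply all_configs_length in Hx; rewrite generator_indS; auto).
  apply expect_derivative; auto.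
Qed.

Lemma deriv_expect_indI i : (i < N)%nat ->
  derivable_pt_lim (fun s => expect N p s (indI i)) t
    (sumV N (fun j => T i j * E (fun x => indS i x * indI j x)) - gamma i * E (indI i)).
Proof.
  intros Hi. rewrite <- expect_inf_rate, <- expect_scal, <- expect_minus.
  rewrite (expect_ext N p t _ (generator N T gamma (indI i)))
    by (intros x Hx; apply all_configs_length in Hx; rewrite generator_indI; auto).
  apply expect_derivative; auto.
Qed.

Lemma deriv_expect_indS_indI i j : (i < N)%nat -> (j < N)%nat -> i <> j -> adj T i j ->
  derivable_pt_lim (fun s => expect N p s (fun x => indS i x * indI j x)) t
    (sumV N (fun k => if Nat.eq_dec k i then 0 else
        T j k * sdiv (E (fun x => indS i x * indS j x) * E (fun x => indS j x * indI k x)) (E (indS j)))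
     - sumV N (fun k => if Nat.eq_dec k j then 0 else
        T i k * sdiv (E (fun x => indS i x * indI k x) * E (fun x => indS i x * indI j x)) (E (indS i)))
     - T i j * E (fun x => indS i x * indI j x)
     - gamma j * E (fun x => indS i x * indI j x)).
Proof.
  intros Hi Hj Hij Hadj.
  rewrite <- sum_closure_SS_I by auto.
  match goal with |- derivable_pt_lim _ _ (?a - ?b - ?c - ?d) =>
    replace (a - b - c - d) with (a - (b + c) - d) by ring end.
  rewrite <- sum_closure_SI_I, <- !expect_inf_rate, <- expect_scal, <- !expect_minus by auto.
  rewrite (expect_ext N p t _ (generator N T gamma (fun y => indS i y * indI j y)))
    by (intros x Hx; apply all_configs_length in Hx; rewrite generator_indS_indI; auto).
  apply expect_derivative; auto.
Qed.

Lemma deriv_expect_indS_indS i j : (i < N)%nat -> (j < N)%nat -> i <> j -> adj T i j ->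
  derivable_pt_lim (fun s => expect N p s (fun x => indS i x * indS j x)) t
    (- sumV N (fun k => if Nat.eq_dec k j then 0 else
        T i k * sdiv (E (fun x => indS i x * indS j x) * E (fun x => indS i x * indI k x)) (E (indS i)))
     - sumV N (fun k => if Nat.eq_dec k i then 0 else
        T j k * sdiv (E (fun x => indS i x * indS j x) * E (fun x => indS j x * indI k x)) (E (indS j)))).
Proof.
  intros Hi Hj Hij Hadj.
  assert (Hji : adj T j i) by (unfold adj in *; tauto).
  rewrite <- expect_indS_indS_comm, <- (sum_closure_SS_I j i), expect_indS_indS_comm, <- sum_closure_SS_I by auto.
  rewrite <- !expect_inf_rate, <- expect_opp, <- expect_minus.
  rewrite (expect_ext N p t _ (generator N T gamma (fun y => indS i y * indS j y)))
    by (intros x Hx; apply all_configs_length in Hx; rewrite generator_indS_indS; auto; ring).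
  apply expect_derivative; auto.
Qed.

End Moments.

Theorem theorem3 (N : nat) (T : nat -> nat -> R) (gamma : nat -> R)
  (pi : nat -> st -> R) (p : R -> config -> R)
  (HT : forall i j, (i < N)%nat -> (j < N)%nat -> 0 <= T i j)
  (HTii : forall i, (i < N)%nat -> T i i = 0)
  (Hgamma : forall i, (i < N)%nat -> 0 < gamma i)
  (Htree : is_forest N T)
  (Hmaster : master_eq N T gamma p)
  (Hinit : indep_init N pi p) :
  let E := expect N p in
  forall t : R, 0 <= t ->
  (forall i : nat, (i < N)%nat ->
     derivable_pt_lim (fun s => E s (indS i)) t
       (- sumV N (fun j => T i j * E t (fun x => indS i x * indI j x)))
   /\
     derivable_pt_lim (fun s => E s (indI i)) t
       (sumV N (fun j => T i j * E t (fun x => indS i x * indI j x))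
        - gamma i * E t (indI i)))
  /\
  (forall i j : nat, (i < N)%nat -> (j < N)%nat -> i <> j -> adj T i j ->
     derivable_pt_lim (fun s => E s (fun x => indS i x * indI j x)) t
       (sumV N (fun k => if Nat.eq_dec k i then 0 else
           T j k * sdiv (E t (fun x => indS i x * indS j x)
                         * E t (fun x => indS j x * indI k x)) (E t (indS j)))
        - sumV N (fun k => if Nat.eq_dec k j then 0 else
           T i k * sdiv (E t (fun x => indS i x * indI k x)
                         * E t (fun x => indS i x * indI j x)) (E t (indS i)))
        - T i j * E t (fun x => indS i x * indI j x)
        - gamma j * E t (fun x => indS i x * indI j x))
   /\
     derivable_pt_lim (fun s => E s (fun x => indS i x * indS j x)) t
       (- sumV N (fun k => if Nat.eq_dec k j then 0 else
           T i k * sdiv (E t (fun x => indS i x * indS j x)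
                         * E t (fun x => indS i x * indI k x)) (E t (indS i)))
        - sumV N (fun k => if Nat.eq_dec k i then 0 else
           T j k * sdiv (E t (fun x => indS i x * indS j x)
                         * E t (fun x => indS j x * indI k x)) (E t (indS j))))).
Proof.
  intros E t Ht. split.
  - intros i Hi. split.
    + eapply deriv_expect_indS; eauto.
    + eapply deriv_expect_indI; eauto.
  - intros i j Hi Hj Hij Hadj. split.
    + eapply deriv_expect_indS_indI; eauto.
    + eapply deriv_expect_indS_indS; eauto.
Qed.
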